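(* In $\mathbb{R}^3$, for $r>0$ let $C_r=[0,\tfrac14]\times D_r$, where $D_r\subset\mathbb{R}^2$ is the disc of radius $r$ centred at $0$ (writing $z=(z_1,\mathbf z_2)$, $\mathbf z_2\in\mathbb{R}^2$). For $r\in(0,e^{-1})$ put $\varrho(r)=\frac{1}{r^2|\ln r|\ln|\ln r|}$ and $U_r(z)=\varrho(r)\mathbf 1_{C_r}(z)$. Then $$\lim_{\varepsilon\to0^+}\ \sup_{x\in\mathbb{R}^3,\ r\in(0,1/5)}\int_{|z-x|<\varepsilon}\frac{|U_r(z)|}{|z-x|}\,dz=0.$$ *)

From HB Require Import structures.
From mathcomp Require Import all_boot all_order all_algebra.
From mathcomp Require Import all_classical all_reals all_analysis.
Set Implicit Arguments. Unset Strict Implicit. Unset Printing Implicit Defensive.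
Import Order.TTheory GRing.Theory Num.Theory.
Import numFieldNormedType.Exports.
Local Open Scope classical_set_scope.
Local Open Scope ring_scope.

(* Points of R^3 are ((z1, z2), z3) : (R * R) * R; z = (z1, bold z2) with bold z2 = (z2, z3). *)
Definition leb3 (R : realType) :=
  (((@lebesgue_measure R) \x (@lebesgue_measure R)) \x (@lebesgue_measure R))%E.

Definition norm3 {R : realType} (z : (R * R) * R) : R :=
  Num.sqrt (z.1.1 ^+ 2 + z.1.2 ^+ 2 + z.2 ^+ 2).

Definition sub3 {R : realType} (z x : (R * R) * R) : (R * R) * R :=
  ((z.1.1 - x.1.1, z.1.2 - x.1.2), z.2 - x.2).

Definition Ccyl {R : realType} (r : R) : set ((R * R) * R) :=
  [set z | 0 <= z.1.1 <= 1 / 4 /\ z.1.2 ^+ 2 + z.2 ^+ 2 <= r ^+ 2].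

Definition rho {R : realType} (r : R) : R :=
  1 / (r ^+ 2 * `|ln r| * ln `|ln r|).

Definition Ur {R : realType} (r : R) (z : (R * R) * R) : R :=
  rho r * \1_(Ccyl r) z.

Definition Iloc {R : realType} (eps r : R) (x : (R * R) * R) : \bar R :=
  (\int[@leb3 R]_(z in [set z | (norm3 (sub3 z x) < eps)%R])
     ((`|Ur r z| / norm3 (sub3 z x))%R)%:E)%E.

Definition supI {R : realType} (eps : R) : \bar R :=
  ereal_sup [set v | exists x r, 0 < r < 1 / 5 /\ v = Iloc eps r x].

From HB Require Import structures.
From mathcomp Require Import all_boot all_order all_algebra.
From mathcomp Require Import all_classical all_reals all_analysis.
From mathcomp Require Import ring lra.
Set Implicit Arguments. Unset Strict Implicit. Unset Printing Implicit Defensive.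
Import Order.TTheory GRing.Theory Num.Theory.
Import numFieldNormedType.Exports.
Local Open Scope classical_set_scope.
Local Open Scope ring_scope.

(* Decompose the ball {|z - x| < eps} into the dyadic shells
   eps/2^(k+1) <= |z - x| < eps/2^k.  On the k-th shell the integrand is at
   most 2 rho(r) 2^k/eps times the indicator of C_r, and C_r meets the shell
   inside a box of axial side 2 eps/2^k and transverse sides 2 min(r, eps/2^k).
   Bounding min(r, eps/2^k) by r for the first N shells and by eps/2^k after
   gives, for every N,
     I(eps, r, x) <= 16 rho(r) (N r^2 + 4/3 (eps/2^N)^2).            (master)
   With N ~ 2|ln r| this yields I <= 96 / ln|ln r|, which is small when r is
   small; with N = 0 it yields I <= 64/3 eps^2 rho(r), which is small when
   eps < r^2.  These two regimes cover all r once eps is small. *)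

Section dyadic_scales.
Variable R : realType.

Lemma dyadic_shell (e t : R) : 0 < t -> t < e ->
  exists k : nat, e / 2 ^+ k.+1 <= t < e / 2 ^+ k.
Proof.
move=> t0 te.
have below : exists k : nat, e / 2 ^+ k.+1 <= t.
  exists (Num.truncn (e / t)).
  have pow_big : ((Num.truncn (e / t)).+1%:R : R) <= 2 ^+ (Num.truncn (e / t)).+1.
    by rewrite -natrX ler_nat; exact/ltnW/ltn_expl.
  rewrite ler_pdivrMr ?exprn_gt0 // -ler_pdivrMl // mulrC.
  exact/ltW/(lt_le_trans (truncnS_gt (e / t)) pow_big).
have [k hk kmin] := ex_minnP below.
exists k; rewrite hk /=.
case: k hk kmin => [|k] hk kmin; first by rewrite expr0 divr1.
by rewrite ltNge; apply/negP => /kmin; rewrite ltnn.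
Qed.

Lemma sum_sqr_halvings (n : nat) (e : R) :
  \sum_(k < n) (e / 2 ^+ k) ^+ 2 <= 4 / 3 * e ^+ 2.
Proof.
elim: n e => [|n IH] e; first by rewrite big_ord0 mulr_ge0 ?sqr_ge0.
rewrite big_ord_recl /= expr0 divr1.
have -> : \sum_(i < n) (e / 2 ^+ bump 0 i) ^+ 2 = \sum_(i < n) (e / 2 / 2 ^+ i) ^+ 2.
  by apply: eq_bigr => i _; rewrite /bump leq0n add1n [2 ^+ _.+1]exprS invfM mulrA.
have := IH (e / 2); have -> : 4 / 3 * (e / 2) ^+ 2 = 4 / 3 * e ^+ 2 / 4 by field.
lra.
Qed.

(* The transverse size used for the k-th shell: the cylinder radius r for the
   first N shells, the shell scale e/2^k afterwards. *)
Definition shell_cap (r e : R) (N k : nat) : R := if (k < N)%N then r else e / 2 ^+ k.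

Lemma shell_cap_ge (r e : R) (N k : nat) :
  r <= shell_cap r e N k \/ e / 2 ^+ k <= shell_cap r e N k.
Proof. by rewrite /shell_cap; case: ifP => _; [left|right]. Qed.

Lemma sum_sqr_shell_cap (N n : nat) (r e : R) :
  \sum_(k < n) shell_cap r e N k ^+ 2 <= N%:R * r ^+ 2 + 4 / 3 * (e / 2 ^+ N) ^+ 2.
Proof.
elim: N n e => [|N IH] n e.
  rewrite mul0r add0r expr0 divr1; apply: le_trans (sum_sqr_halvings n e).
  by apply: ler_sum => i _; rewrite /shell_cap ltn0.
case: n => [|n].
  by rewrite big_ord0; apply: addr_ge0; apply: mulr_ge0 => //; exact: sqr_ge0.
rewrite big_ord_recl.
have -> : \sum_(i < n) shell_cap r e N.+1 (bump 0 i) ^+ 2 =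
          \sum_(i < n) shell_cap r (e / 2) N i ^+ 2.
  apply: eq_bigr => i _.
  by rewrite /shell_cap /bump leq0n add1n ltnS [2 ^+ _.+1]exprS invfM mulrA.
have -> : shell_cap r e N.+1 (@ord0 n) = r by rewrite /shell_cap.
have := IH n (e / 2); have -> : e / 2 / 2 ^+ N = e / 2 ^+ N.+1.
  by rewrite exprS invfM mulrA.
by rewrite -natr1; lra.
Qed.

End dyadic_scales.

Lemma nneseries_le_bound (R : realType) (u : nat -> R) (U : R) :
  (forall k, 0 <= u k) -> (forall n, \sum_(k < n) u k <= U) ->
  (\sum_(k <oo) (u k)%:E <= U%:E)%E.
Proof.
move=> u0 uU; apply: lime_le.
  by apply: is_cvg_nneseries => n _ _; rewrite lee_fin.
by apply: nearW => n; rewrite sumEFin lee_fin big_mkord.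
Qed.

Section nonneg_integrals.
Context d (T : measurableType d) (R : realType) (mu : {measure set T -> \bar R}).
Local Open Scope ereal_scope.

(* Monotonicity of the integral of nonnegative functions, with no measurability
   assumption: such integrals are suprema over simple minorants. *)
Lemma ge0_le_integral_nomeas (D : set T) (f g : T -> \bar R) :
  (forall x, D x -> 0 <= f x) -> (forall x, D x -> f x <= g x) ->
  \int[mu]_(x in D) f x <= \int[mu]_(x in D) g x.
Proof.
move=> f0 fg.
have g0 x : D x -> 0 <= g x by move=> Dx; exact: le_trans (f0 _ Dx) (fg _ Dx).
rewrite (ge0_integralE _ f0) (ge0_integralE _ g0).
apply: ereal_sup_le => _ [h hf <-]; exists h => //= x.
exact: le_trans (hf x) (lee_restrict fg x).
Qed.

Lemma integral_scaled_indic (B : set T) (c : R) : measurable B -> (0 <= c)%R ->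
  \int[mu]_z (c * \1_B z)%:E = c%:E * mu B.
Proof.
move=> mB c0; rewrite (integralZl_indic measurableT (fun _ => B)) //; last first.
  by move=> /lt_le_trans/(_ c0); rewrite ltxx.
by rewrite integral_indic // setIT.
Qed.

End nonneg_integrals.

Section cylinder_geometry.
Variable R : realType.
Implicit Types (r s m b : R) (x z : (R * R) * R).

Definition slab r b s : set R := [set` `[-r, r]] `&` [set` `](b - s), (b + s)[].

Lemma measurable_slab r b s : measurable (slab r b s).
Proof. by apply: measurableI; exact: measurable_itv. Qed.

Lemma slab_measure_le r b s m : 0 < r -> 0 < s -> r <= m \/ s <= m ->
  (lebesgue_measure (slab r b s) <= (2 * m)%:E)%E.
Proof.
move=> r0 s0 [rm|sm].
- apply: (@le_trans _ _ (lebesgue_measure [set` `[-r, r]])).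
    apply: le_measure; rewrite ?inE; [exact: measurable_slab|exact: measurable_itv|].
    by move=> y [].
  by rewrite lebesgue_measure_itv /= lte_fin gtrN // lee_fin; lra.
- apply: (@le_trans _ _ (lebesgue_measure [set` `](b - s), (b + s)[])).
    apply: le_measure; rewrite ?inE; [exact: measurable_slab|exact: measurable_itv|].
    by move=> y [].
  by rewrite lebesgue_measure_itv /= lte_fin ltrD2l gtrN // lee_fin; lra.
Qed.

Definition box x s r : set ((R * R) * R) :=
  ([set` `](x.1.1 - s), (x.1.1 + s)[] `*` slab r x.1.2 s) `*` slab r x.2 s.

Lemma measurable_box x s r : measurable (box x s r).
Proof.
apply: measurableX; last exact: measurable_slab.
by apply: measurableX; [exact: measurable_itv|exact: measurable_slab].
Qed.

Lemma box_measure_le x s r m : 0 < r -> 0 < s -> r <= m \/ s <= m ->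
  (leb3 (box x s r) <= (2 * s * (2 * m) * (2 * m))%:E)%E.
Proof.
move=> r0 s0 hm.
have m0 : 0 <= m by case: hm; lra.
have ms : (x.1.1 - s < x.1.1 + s) by lra.
rewrite /leb3 /box product_measure1E; last 2 first.
- by apply: measurableX; [exact: measurable_itv|exact: measurable_slab].
- exact: measurable_slab.
rewrite [X in (X * _)%E](@product_measure1E _ _ _ _ R lebesgue_measure lebesgue_measure
  _ _ (measurable_itv `](x.1.1 - s), (x.1.1 + s)[) (measurable_slab r x.1.2 s)).
rewrite [X in (X * _ * _)%E]lebesgue_measure_itv /= lte_fin ms !EFinM.
apply: lee_pmul; [|exact: measure_ge0| |exact: slab_measure_le].
- by apply: mule_ge0; [rewrite lee_fin; lra|exact: measure_ge0].
- apply: lee_pmul; [rewrite lee_fin; lra|exact: measure_ge0| |exact: slab_measure_le].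
  by rewrite lee_fin; lra.
Qed.

Lemma coord_le_norm3 (a b c : R) :
  [/\ `|a| <= Num.sqrt (a ^+ 2 + b ^+ 2 + c ^+ 2),
      `|b| <= Num.sqrt (a ^+ 2 + b ^+ 2 + c ^+ 2) &
      `|c| <= Num.sqrt (a ^+ 2 + b ^+ 2 + c ^+ 2)].
Proof.
have := sqr_ge0 a; have := sqr_ge0 b; have := sqr_ge0 c.
by split; rewrite -sqrtr_sqr; apply: ler_wsqrtr; lra.
Qed.

Lemma disc_coord_bound (u v r : R) : 0 < r -> u ^+ 2 + v ^+ 2 <= r ^+ 2 -> -r <= u <= r.
Proof.
move=> r0 h; rewrite -ler_norml -(gtr0_norm r0) -!sqrtr_sqr; apply: ler_wsqrtr.
have := sqr_ge0 v; lra.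
Qed.

Lemma cylinder_near_in_box x z s r : 0 < r -> Ccyl r z -> norm3 (sub3 z x) < s ->
  box x s r z.
Proof.
move=> r0 [_ zD]; rewrite /norm3 /sub3 /=.
have [] := coord_le_norm3 (z.1.1 - x.1.1) (z.1.2 - x.1.2) (z.2 - x.2).
rewrite !ler_norml => /andP[h1 h1'] /andP[h2 h2'] /andP[h3 h3'] zs.
have zD' : z.2 ^+ 2 + z.1.2 ^+ 2 <= r ^+ 2 by rewrite addrC.
have := disc_coord_bound r0 zD; have := disc_coord_bound r0 zD'.
move=> /andP[? ?] /andP[? ?]; split; first split.
- by rewrite /= in_itv /=; apply/andP; split; lra.
- by split; rewrite /= in_itv /=; apply/andP; split; lra.
- by split; rewrite /= in_itv /=; apply/andP; split; lra.
Qed.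

End cylinder_geometry.

Section master_estimate.
Variable R : realType.
Variables (eps r : R) (x : (R * R) * R).
Hypotheses (eps_gt0 : 0 < eps) (r_gt0 : 0 < r) (rho_ge0 : 0 <= rho r).

Lemma dyadic_scale_gt0 (k : nat) : 0 < eps / 2 ^+ k.
Proof. by rewrite divr_gt0 ?exprn_gt0. Qed.

Definition shell_majorant (k : nat) (z : (R * R) * R) : R :=
  2 * rho r / (eps / 2 ^+ k) * \1_(box x (eps / 2 ^+ k) r) z.

Lemma shell_weight_ge0 (k : nat) : 0 <= 2 * rho r / (eps / 2 ^+ k).
Proof. exact: divr_ge0 (mulr_ge0 (ler0n _ 2) rho_ge0) (ltW (dyadic_scale_gt0 k)). Qed.

Lemma shell_majorant_ge0 (k : nat) z : 0 <= shell_majorant k z.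
Proof. by rewrite mulr_ge0 ?shell_weight_ge0 // indicE. Qed.

Lemma integrand_le_shell_majorant z : norm3 (sub3 z x) < eps ->
  exists k, `|Ur r z| / norm3 (sub3 z x) <= shell_majorant k z.
Proof.
move=> z_near.
have [z0|z0] := eqVneq (norm3 (sub3 z x)) 0.
  by exists 0%N; rewrite z0 invr0 mulr0 shell_majorant_ge0.
have [zC|zC] := boolP (z \in Ccyl r); last first.
  by exists 0%N; rewrite /Ur indicE (negbTE zC) mulr0 normr0 mul0r shell_majorant_ge0.
have dist_gt0 : 0 < norm3 (sub3 z x) by rewrite lt_neqAle eq_sym z0 sqrtr_ge0.
have [k /andP[shell_lo shell_hi]] := dyadic_shell dist_gt0 z_near.
exists k; have sk_gt0 := dyadic_scale_gt0 k.
rewrite /shell_majorant indicE mem_set; last first.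
  by apply: cylinder_near_in_box r_gt0 _ shell_hi; rewrite -inE.
rewrite /Ur indicE zC !mulr1 ger0_norm //.
have half_le : eps / 2 ^+ k <= 2 * norm3 (sub3 z x).
  by move: shell_lo; rewrite exprS invfM mulrA; lra.
rewrite ler_pdivrMr // mulrAC -[X in X * _]mulrA ler_pdivlMr //.
have := rho_ge0; nra.
Qed.

Lemma Iloc_le_shell_series :
  (Iloc eps r x <= \sum_(k <oo)
     ((2 * rho r / (eps / 2 ^+ k))%:E * leb3 (box x (eps / 2 ^+ k) r)))%E.
Proof.
pose g k z := (shell_majorant k z)%:E.
have g0 k z : (0 <= g k z)%E by rewrite lee_fin shell_majorant_ge0.
have -> : (\sum_(k <oo) ((2 * rho r / (eps / 2 ^+ k))%:E * leb3 (box x (eps / 2 ^+ k) r)))%E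
          = (\int[@leb3 R]_z \sum_(k <oo) g k z)%E.
  rewrite integral_nneseries //; last first.
    move=> k; apply/measurable_realfun.measurable_EFinP.
    apply: measurable_realfun.measurable_funM; first exact: measurable_cst.
    by apply: measurable_realfun.measurable_indic; exact: measurable_box.
  apply: eq_eseriesr => k _.
  rewrite /g /shell_majorant integral_scaled_indic ?shell_weight_ge0 //.
  exact: measurable_box.
rewrite /Iloc integral_mkcond; apply: ge0_le_integral_nomeas => z _; rewrite /patch /=.
  by case: ifP => // _; rewrite lee_fin divr_ge0 ?sqrtr_ge0.
case: ifP => [zB|_]; last exact: nneseries_ge0.
have [k hk] := integrand_le_shell_majorant (set_mem zB).
apply: (@le_trans _ _ (g k z)); first by rewrite lee_fin.
apply: le_trans (nneseries_lim_ge k.+1 (fun n _ _ => g0 n z)).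
by rewrite big_nat_recr //= leeDr // sume_ge0.
Qed.

Lemma Iloc_le_master (N : nat) :
  (Iloc eps r x <= (16 * rho r * (N%:R * r ^+ 2 + 4 / 3 * (eps / 2 ^+ N) ^+ 2))%:E)%E.
Proof.
have w_ge0 : 0 <= 16 * rho r by exact: mulr_ge0 (ler0n _ 16) rho_ge0.
apply: le_trans Iloc_le_shell_series _.
apply: (@le_trans _ _ (\sum_(k <oo) (16 * rho r * shell_cap r eps N k ^+ 2)%:E)%E).
  apply: lee_nneseries => [k _ _|k _]; first by rewrite mule_ge0 ?lee_fin ?shell_weight_ge0.
  have sk_gt0 := dyadic_scale_gt0 k.
  apply: le_trans (lee_pmul _ (measure_ge0 _ _) (lexx _)
    (box_measure_le x r_gt0 sk_gt0 (shell_cap_ge r eps N k))) _.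
    by rewrite lee_fin shell_weight_ge0.
  rewrite -EFinM lee_fin [leLHS](_ : _ = 16 * rho r * shell_cap r eps N k ^+ 2) //.
  by field; rewrite expf_neq0 ?pnatr_eq0 // gt_eqF.
apply: (@nneseries_le_bound _ (fun k => 16 * rho r * shell_cap r eps N k ^+ 2)) => [k|n].
  by rewrite mulr_ge0 ?sqr_ge0.
by rewrite -mulr_sumr; apply: ler_wpM2l; [|exact: sum_sqr_shell_cap].
Qed.

End master_estimate.

Section logarithms.
Variable R : realType.
Implicit Types (r eps M : R).

(* e <= 4, from e^(1/2) <= 1 / (1 - 1/2) = 2. *)
Lemma expR1_le4 : expR (1 : R) <= 4.
Proof.
have := expR_ge1Dx (- (1 / 2) : R); have := expRxMexpNx_1 (1 / 2 : R).
have -> : expR (1 : R) = expR (1 / 2) ^+ 2 by rewrite -expRM_natl; congr expR; field.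
have := expR_gt0 (1 / 2 : R); nra.
Qed.

Lemma ln5_gt1 : 1 < ln (5 : R).
Proof.
rewrite -[X in X < _](@expRK R 1) ltr_ln ?posrE ?expR_gt0 //.
have := expR1_le4; lra.
Qed.

Lemma ln5_lt_abs_ln r : 0 < r -> r < 1 / 5 -> ln 5 < `|ln r|.
Proof.
move=> r0 r5; have := ln5_gt1.
have : ln r < ln (1 / 5) by rewrite ltr_ln ?posrE //; lra.
rewrite div1r lnV ?posrE // => lnr_lt l5.
by rewrite ltr0_norm; lra.
Qed.

Lemma lnln_gt0 r : 0 < r -> r < 1 / 5 -> 0 < ln `|ln r|.
Proof. by move=> r0 r5; apply: ln_gt0; have := ln5_lt_abs_ln r0 r5; have := ln5_gt1; lra. Qed.

Lemma rho_ge0 r : 0 < r -> r < 1 / 5 -> 0 <= rho r.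
Proof.
move=> r0 r5; have l2_gt0 := lnln_gt0 r0 r5.
apply: divr_ge0; first exact: ler01.
by apply: mulr_ge0; [apply: mulr_ge0; [exact: sqr_ge0|exact: normr_ge0]|exact: ltW].
Qed.

(* Since e <= 4, a logarithm |ln r| <= n+1 forces r >= 4^-(n+1). *)
Lemma inv_pow4_le r (n : nat) : 0 < r -> r < 1 -> `|ln r| <= n.+1%:R ->
  1 / 2 ^+ (2 * n.+1) <= r.
Proof.
move=> r0 r1; rewrite ltr0_norm; last by apply: ln_lt0; rewrite r0 r1.
move=> lnr_ge.
have inv_le_e : r^-1 <= expR (1 : R) ^+ n.+1.
  rewrite -expRM_natl mulr1 -[r^-1]lnK ?posrE ?invr_gt0 // lnV ?posrE //.
  by rewrite ler_expR; lra.
have e_le_4 : expR (1 : R) ^+ n.+1 <= 4 ^+ n.+1.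
  by apply: lerXn2r; rewrite ?nnegrE ?expR_ge0 // expR1_le4.
rewrite exprM (_ : (2 : R) ^+ 2 = 4); last by rewrite expr2; lra.
rewrite ler_pdivrMr ?exprn_gt0 // mulrC -ler_pdivrMr // div1r.
exact: le_trans inv_le_e e_le_4.
Qed.

(* rho(r) r^2 = 1 / (|ln r| ln|ln r|) is bounded uniformly over (0, 1/5). *)
Lemma rho_sqr_le r : 0 < r -> r < 1 / 5 -> rho r * r ^+ 2 <= (ln 5 * ln (ln 5))^-1.
Proof.
move=> r0 r5; have L5 := ln5_lt_abs_ln r0 r5; have l5 := ln5_gt1.
have l2_gt0 := lnln_gt0 r0 r5.
have lnln5_gt0 : 0 < ln (ln (5 : R)) by apply: ln_gt0.
have c_le : ln 5 * ln (ln 5) <= `|ln r| * ln `|ln r|.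
  apply: ler_pM; [lra|exact: ltW|exact: ltW|].
  by rewrite ler_ln ?posrE //; lra.
have -> : rho r * r ^+ 2 = (`|ln r| * ln `|ln r|)^-1.
  by rewrite /rho; field; rewrite !gt_eqF //; lra.
by rewrite lef_pV2 ?posrE // mulr_gt0 //; lra.
Qed.

Lemma lnln_ge r eps M : 0 < r -> r < 1 -> r ^+ 2 <= eps ->
  eps < expR (- (2 * expR M)) -> M <= ln `|ln r|.
Proof.
move=> r0 r1 r2_le eps_lt.
have eps_gt0 : 0 < eps by apply: lt_le_trans (exprn_gt0 _ r0) r2_le.
have lnr_le : 2 * ln r <= ln eps by rewrite mulr_natl -lnXn // ler_ln ?posrE ?exprn_gt0.
have : ln eps < - (2 * expR M) by rewrite -[X in _ < X]expRK ltr_ln ?posrE ?expR_gt0.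
rewrite ltr0_norm; last by apply: ln_lt0; rewrite r0 r1.
move=> lneps_lt; have expM_gt0 := expR_gt0 M.
by rewrite -[M]expRK ler_ln ?posrE; lra.
Qed.

End logarithms.

Section two_regimes.
Variable R : realType.
Implicit Types (eps r : R) (x : (R * R) * R).

(* Master estimate with N = 2(n+1) shells, n = floor |ln r|: then
   eps / 2^N <= r and N <= 2 |ln r| + 2, so that I <= 96 / ln |ln r|. *)
Lemma Iloc_le_lnln eps r x : 0 < eps -> eps <= 1 -> 0 < r -> r < 1 / 5 ->
  (Iloc eps r x <= (96 / ln `|ln r|)%:E)%E.
Proof.
move=> e0 e1 r0 r5.
have L5 := ln5_lt_abs_ln r0 r5; have l5 := ln5_gt1 R; have l2_gt0 := lnln_gt0 r0 r5.
have rho0 := rho_ge0 r0 r5.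
have [n /andP[Ln nL]] : exists n : nat, n%:R <= `|ln r| < n.+1%:R.
  by exists (Num.truncn `|ln r|); apply: truncn_itv.
apply: le_trans (Iloc_le_master x e0 r0 rho0 (2 * n.+1)) _.
have scale_le : eps / 2 ^+ (2 * n.+1) <= r.
  apply: le_trans (inv_pow4_le r0 _ (ltW nL)); last lra.
  by rewrite ler_pM2r ?invr_gt0 ?exprn_gt0.
have sq_le : (eps / 2 ^+ (2 * n.+1)) ^+ 2 <= r ^+ 2.
  by apply: lerXn2r; rewrite // nnegrE ltW ?(dyadic_scale_gt0 e0).
have N_le : (2 * n.+1)%:R <= 2 * `|ln r| + 2 :> R by rewrite natrM -natr1; lra.
have rhoE : 96 / ln `|ln r| = 96 * (rho r * r ^+ 2 * `|ln r|).
  by rewrite /rho; field; rewrite !gt_eqF //; lra.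
have P0 : 0 <= rho r * r ^+ 2 by exact: mulr_ge0 rho0 (sqr_ge0 r).
have shells_le : 0 <= (2 * `|ln r| + 2 - (2 * n.+1)%:R) * (rho r * r ^+ 2).
  by apply: mulr_ge0; lra.
have tail_le : 0 <= (r ^+ 2 - (eps / 2 ^+ (2 * n.+1)) ^+ 2) * rho r.
  by apply: mulr_ge0; lra.
have L_ge1 : 0 <= (`|ln r| - 1) * (rho r * r ^+ 2) by apply: mulr_ge0; lra.
by rewrite lee_fin rhoE; lra.
Qed.

(* Master estimate with N = 0, for eps <= r^2:
   I <= (64/3) eps^2 rho(r) <= (64/3) eps rho(r) r^2 <= (64/3) eps / (ln 5 ln ln 5). *)
Lemma Iloc_le_eps eps r x : 0 < eps -> 0 < r -> r < 1 / 5 -> eps <= r ^+ 2 ->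
  (Iloc eps r x <= (64 / 3 * eps / (ln 5 * ln (ln 5)))%:E)%E.
Proof.
move=> e0 r0 r5 eps_le; have rho0 := rho_ge0 r0 r5.
apply: le_trans (Iloc_le_master x e0 r0 rho0 0) _.
have rho_r2 := rho_sqr_le r0 r5.
have eps_le' : 0 <= (r ^+ 2 - eps) * eps * rho r.
  by apply: mulr_ge0 => //; apply: mulr_ge0; lra.
have rho_r2' : 0 <= ((ln 5 * ln (ln 5))^-1 - rho r * r ^+ 2) * eps.
  by apply: mulr_ge0; lra.
by rewrite lee_fin expr0 divr1 mul0r add0r; lra.
Qed.

End two_regimes.

(* The integral is small uniformly in x and r once eps is small: for r^2 <= eps
   the first regime applies and |ln r| is large, for eps < r^2 the second one
   applies. *)
Lemma Iloc_uniformly_small (R : realType) (d : R) : 0 < d ->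
  exists2 eta : R, 0 < eta & forall eps r x,
    0 < eps < eta -> 0 < r < 1 / 5 -> (Iloc eps r x <= d%:E)%E.
Proof.
move=> d0; have l5 := ln5_gt1 R.
have c_gt0 : 0 < ln (5 : R) * ln (ln 5) by rewrite mulr_gt0 ?ln_gt0 //; lra.
exists (Num.min 1 (Num.min (expR (- (2 * expR (96 / d))))
                           (3 / 64 * d * (ln 5 * ln (ln 5))))).
  by rewrite !lt_min ltr01 expR_gt0 /=; nra.
move=> eps r x /andP[e0]; rewrite !lt_min => /and3P[e1 e2 e3] /andP[r0 r5].
have [r2_le|r2_gt] := leP (r ^+ 2) eps.
- apply: le_trans (Iloc_le_lnln x e0 (ltW e1) r0 r5) _.
  have l2_gt0 := lnln_gt0 r0 r5.
  have l2_ge : 96 / d <= ln `|ln r| by apply: lnln_ge r0 _ r2_le e2; lra.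
  by rewrite lee_fin ler_pdivrMr //; rewrite ler_pdivrMr // in l2_ge; lra.
- apply: le_trans (Iloc_le_eps x e0 r0 r5 (ltW r2_gt)) _.
  by rewrite lee_fin ler_pdivrMr //; lra.
Qed.

Lemma cvge0_squeeze (T : Type) (F : set_system T) (FF : Filter F) (R : realType)
    (f : T -> \bar R) :
  (\forall t \near F, 0 <= f t)%E ->
  (forall d : R, 0 < d -> \forall t \near F, (f t <= d%:E)%E) ->
  f @ F --> 0%E.
Proof.
move=> f_ge0 f_small.
have f_fin : \forall t \near F, f t \is a fin_num.
  apply: filterS2 f_ge0 (f_small 1 ltr01) => t ft0 ft1.
  by rewrite ge0_fin_numE // (le_lt_trans ft1) ?ltry.
apply/fine_cvgP; split => //; apply/cvgrPdist_le => d d0.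
apply: filterS3 f_ge0 (f_small d d0) f_fin => t ft0 ftd ftfin.
by rewrite sub0r normrN ger0_norm ?fine_ge0 // -lee_fin fineK.
Qed.

Lemma Iloc_ge0 (R : realType) (eps r : R) x : (0 <= Iloc eps r x)%E.
Proof. by apply: integral_ge0 => z _; rewrite lee_fin divr_ge0 ?sqrtr_ge0. Qed.

Lemma supI_ge0 (R : realType) (eps : R) : (0 <= supI eps)%E.
Proof.
apply: le_trans (Iloc_ge0 eps (1 / 10) (0, 0, 0)) _.
by apply: ereal_sup_ubound; exists (0, 0, 0), (1 / 10); split => //; apply/andP; split; lra.
Qed.

Theorem lemma4p1 (R : realType) :
  (fun eps : R => supI eps) @ 0^'+ --> (0 : \bar R)%E.
Proof.
apply: cvge0_squeeze; first by apply: nearW => eps; exact: supI_ge0.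
move=> d d0; have [eta eta0 Iloc_small] := Iloc_uniformly_small d0.
near=> eps; apply: ge_ereal_sup => _ [x [r [r_range ->]]].
apply: Iloc_small r_range; apply/andP; split; near: eps.
- exact: nbhs_right_gt.
- exact: nbhs_right_lt.
Unshelve. all: by end_near.
Qed.
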